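(* Let $\bm X$ be an integrable random vector in $\mathbb{R}^d$, and let $\bm Y_1,\ldots,\bm Y_k\in\mathbb{R}^m$ be observations that are conditionally i.i.d. given $\bm X$ with a common conditional density $f_{\bm Y|\bm X}$, i.e. the joint density factorizes as $f_{\bm X}(\bm x)\prod_{i=1}^k f_{\bm Y|\bm X}(\bm y_i|\bm x)$. Let $\bm Y$ denote a generic observation with $(\bm X,\bm Y)$ having density $f_{\bm X}(\bm x)f_{\bm Y|\bm X}(\bm y|\bm x)$, let $g(\bm y)=\mathbb{E}[\bm X\mid\bm Y=\bm y]$, and set $W=\|\bm X-g(\bm Y)\|_2^2$. Define \[ D_2(k)=\mathbb{E}\!\left[\min_{1\le i\le k}\|\bm X-g(\bm Y_i)\|_2^2\right]. \] Assume there are constants $C>0$, $\alpha>0$, $a_0>0$ such that $\mathbb{P}(W\le a)\le Ca^\alpha$ for all $a\in[0,a_0]$. Then for every $k$ such that \[ a^\star\triangleq\left(\frac{1}{C(1+\alpha k)}\right)^{1/\alpha}\le a_0, \] we have \[ D_2(k)\ge e^{-1/\alpha}\left(\frac{1}{C(1+\alpha k)}\right)^{1/\alpha}. \] In particular, $D_2(k)=\Omega(k^{-1/\alpha})$ as $k\to\infty$.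
   Context: $g$ is the single-agent MMSE estimator (conditional expectation), applied by each of the $k$ agents to its own observation. $f=\Omega(h)$ means $f(k)\ge c\,h(k)$ for some constant $c>0$ and all sufficiently large $k$. *)

From HB Require Import structures.
From mathcomp Require Import all_boot all_order all_algebra.
From mathcomp Require Import all_classical all_reals all_analysis.
Set Implicit Arguments. Unset Strict Implicit. Unset Printing Implicit Defensive.
Import Order.TTheory GRing.Theory Num.Theory.
Import numFieldNormedType.Exports.
Local Open Scope classical_set_scope.
Local Open Scope ring_scope.

(* R^n is represented by n.-tuple R, equipped by the library with the product
   (= Borel) sigma-algebra generated by the coordinate projections. *)

Definition sqdist (R : realType) (n : nat) (x y : n.-tuple R) : R :=
  \sum_(j < n) (tnth x j - tnth y j) ^+ 2.

Section defs.
Context (R : realType) (dO : measure_display) (Omega : measurableType dO)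
  (P : probability Omega R) (d m : nat).

(* Joint-density factorization: for every k, the vector (X, Y_0, ..., Y_{k-1})
   has joint density fX(x) * prod_{i<k} fY(y_i | x) w.r.t. lX (x) lY^k;
   stated on measurable rectangles (which determine the joint law). *)
Definition cond_iid_density (X : Omega -> d.-tuple R) (Y : nat -> Omega -> m.-tuple R)
  (lX : {measure set (d.-tuple R) -> \bar R}) (lY : {measure set (m.-tuple R) -> \bar R})
  (fX : d.-tuple R -> R) (fY : m.-tuple R -> d.-tuple R -> R) : Prop :=
  forall (k : nat) (A : set (d.-tuple R)) (B : 'I_k -> set (m.-tuple R)),
    measurable A -> (forall i, measurable (B i)) ->
    P [set w | A (X w) /\ forall i : 'I_k, B i (Y i w)] =
    (\int[lX]_(x in A) ((fX x)%:E *
        \big[*%E/1%E]_(i < k) \int[lY]_(y in B i) (fY y x)%:E))%E.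

Definition pair_density (X : Omega -> d.-tuple R) (Y : Omega -> m.-tuple R)
  (lX : {measure set (d.-tuple R) -> \bar R}) (lY : {measure set (m.-tuple R) -> \bar R})
  (fX : d.-tuple R -> R) (fY : m.-tuple R -> d.-tuple R -> R) : Prop :=
  forall (A : set (d.-tuple R)) (B : set (m.-tuple R)),
    measurable A -> measurable B ->
    P [set w | A (X w) /\ B (Y w)] =
    (\int[lX]_(x in A) ((fX x)%:E * \int[lY]_(y in B) (fY y x)%:E))%E.

Definition is_cond_exp_fun (X : Omega -> d.-tuple R) (Y : Omega -> m.-tuple R)
  (g : m.-tuple R -> d.-tuple R) : Prop :=
  measurable_fun [set: m.-tuple R] g /\
  (forall j : 'I_d, P.-integrable [set: Omega] (fun w => (tnth (g (Y w)) j)%:E)) /\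
  (forall (B : set (m.-tuple R)) (j : 'I_d), measurable B ->
     (\int[P]_(w in Y @^-1` B) (tnth (X w) j)%:E =
      \int[P]_(w in Y @^-1` B) (tnth (g (Y w)) j)%:E)%E).

(* D_2(k) = E[ min_{1<=i<=k} ||X - g(Y_i)||^2 ]  (agents indexed 0..k-1) *)
Definition D2 (X : Omega -> d.-tuple R) (Y : nat -> Omega -> m.-tuple R)
  (g : m.-tuple R -> d.-tuple R) (k : nat) : \bar R :=
  (\int[P]_w \big[Order.min/+oo]_(i < k) (sqdist (X w) (g (Y i w)))%:E)%E.

End defs.

From HB Require Import structures.
From mathcomp Require Import all_boot all_order all_algebra.
From mathcomp Require Import all_classical all_reals all_analysis measurable_realfun.
From mathcomp Require Import ring lra.
Set Implicit Arguments. Unset Strict Implicit. Unset Printing Implicit Defensive.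
Import Order.TTheory GRing.Theory Num.Theory.
Local Open Scope classical_set_scope.
Local Open Scope ring_scope.

(* Fix a >= 0 and let E be the event that every agent's squared error exceeds a;
   since the minimum of the errors is at least a on E, D_2(k) >= a P(E).  Given
   X = x the agents err independently, each with probability
   q(x) = P(W > a | X = x), so P(E) = E[q(X)^k] >= E[q(X)]^k = P(W > a)^k by
   Jensen's inequality.  At a = a* the small-ball assumption gives
   P(W > a) >= alpha k / (1 + alpha k), and (alpha k / (1 + alpha k))^k
   >= e^(-1/alpha). *)

Lemma exprS_ge_tangent (R : realDomainType) (p q : R) n : 0 <= p -> 0 <= q ->
  p ^+ n.+1 + n.+1%:R * p ^+ n * (q - p) <= q ^+ n.+1.
Proof.
move=> p0 q0; elim: n => [|n IHn]; first by rewrite !expr1 expr0 mulr1 mul1r addrC subrK.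
have step : 0 <= q * (q ^+ n.+1 - (p ^+ n.+1 + n.+1%:R * p ^+ n * (q - p))).
  by rewrite mulr_ge0 // subr_ge0.
have square : 0 <= n.+1%:R * p ^+ n * (q - p) ^+ 2.
  by rewrite mulr_ge0 ?sqr_ge0 // mulr_ge0 ?exprn_ge0.
move: step square; rewrite !exprS -[n.+2%:R]natr1 expr0 mulr1.
move: (p ^+ n) (q ^+ n) (n.+1%:R : R) => pn qn N; nra.
Qed.

Lemma expR_le_expr_ratio (R : realType) (al : R) k : 0 < al ->
  expR (- al^-1) <= (al * k%:R / (1 + al * k%:R)) ^+ k.
Proof.
move=> al0; case: k => [|n]; first by rewrite expr0 expR_le1 oppr_le0 invr_ge0 ltW.
set t := al * n.+1%:R; have t0 : 0 < t by rewrite mulr_gt0.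
have u0 : 0 < t^-1 by rewrite invr_gt0.
have -> : t / (1 + t) = (1 + t^-1)^-1.
  by field; rewrite gt_eqF //= gt_eqF // addr_gt0.
(* (1 + 1/t)^(n+1) <= exp((n+1)/t) = exp(1/al) *)
rewrite exprVn expRN lef_pV2 ?posrE ?expR_gt0 ?exprn_gt0 ?addr_gt0 //.
apply: le_trans (lerXn2r n.+1 _ _ (expR_ge1Dx t^-1)) _.
- by rewrite nnegrE ltW // addr_gt0.
- by rewrite nnegrE expR_ge0.
by rewrite -expRM_natl /t invfM mulrCA mulfV ?mulr1 // gt_eqF.
Qed.

Section measure_unique_rectangles.
Local Open Scope ereal_scope.

Lemma measure_unique_setX d1 d2 (T1 : measurableType d1) (T2 : measurableType d2)
    (R : realType) (mu nu : {measure set (T1 * T2) -> \bar R}) :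
  mu setT < +oo ->
  (forall A B, measurable A -> measurable B -> mu (A `*` B) = nu (A `*` B)) ->
  forall S, measurable S -> mu S = nu S.
Proof.
move=> mu_fin mu_nu S mS.
pose rects : set (set (T1 * T2)) :=
  [set A `*` B | A in measurable & B in measurable].
apply: (measure_unique rects (fun=> setT)) => //.
- exact: measurable_prod_measurableType.
- move=> _ _ [A1 mA1 [B1 mB1 <-]] [A2 mA2 [B2 mB2 <-]]; rewrite -setXI.
  exists (A1 `&` A2); first exact: measurableI.
  by exists (B1 `&` B2) => //; exact: measurableI.
- by move=> _; rewrite -setXTT; exists setT => //; exists setT.
- by rewrite bigcup_const //; exists 0%N.
- by move=> _ [A mA [B mB <-]]; exact: mu_nu.
Qed.

End measure_unique_rectangles.

Section jensen.
Context d (T : measurableType d) (R : realType) (mu : {measure set T -> \bar R}).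
Local Open Scope ereal_scope.

Let integral_EFinZl (c : R) (f : T -> R) : (0 <= c)%R -> (forall x, 0 <= f x)%R ->
  measurable_fun setT f -> \int[mu]_x (c * f x)%:E = c%:E * \int[mu]_x (f x)%:E.
Proof.
move=> c0 f0 mf; under eq_integral do rewrite EFinM.
by rewrite ge0_integralZl_EFin // => [x _|]; [rewrite lee_fin | exact/measurable_EFinP].
Qed.

Let integral_EFinD (f g : T -> R) : (forall x, 0 <= f x)%R -> (forall x, 0 <= g x)%R ->
  measurable_fun setT f -> measurable_fun setT g ->
  \int[mu]_x (f x + g x)%:E = \int[mu]_x (f x)%:E + \int[mu]_x (g x)%:E.
Proof.
move=> f0 g0 mf mg; under eq_integral do rewrite EFinD.
by rewrite ge0_integralD // => [x _||x _|]; rewrite ?lee_fin //; exact/measurable_EFinP.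
Qed.

Lemma jensen_exprn (w q : T -> R) (p : R) n :
  measurable_fun setT w -> measurable_fun setT q ->
  (forall x, (0 <= w x)%R) -> (forall x, (0 <= q x)%R) ->
  \int[mu]_x (w x)%:E = 1 -> \int[mu]_x (w x * q x)%:E = p%:E ->
  (p ^+ n)%:E <= \int[mu]_x (w x * q x ^+ n)%:E.
Proof.
move=> mw mq w0 q0 w1 wq_p.
have p0 : (0 <= p)%R.
  by rewrite -lee_fin -wq_p; apply: integral_ge0 => x _; rewrite lee_fin mulr_ge0.
case: n => [|n]; first by under eq_integral do rewrite expr0 mulr1; rewrite w1.
have mwq k : measurable_fun setT (fun x => w x * q x ^+ k)%R.
  by apply: measurable_funM => //; exact: measurable_funX.
(* the tangent-line inequality at p, with every term moved to the side where it
   is nonnegative so that it can be integrated in \bar R *)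
set N : R := n.+1%:R.
have tangent : \int[mu]_x (p ^+ n.+1 * w x + N * p ^+ n * (w x * q x))%:E
    <= \int[mu]_x (w x * q x ^+ n.+1 + N * p ^+ n.+1 * w x)%:E.
  apply: ge0_le_integral => //.
  - by move=> x _; rewrite lee_fin addr_ge0 ?mulr_ge0 ?exprn_ge0.
  - apply/measurable_EFinP/measurable_funD; first exact: measurable_funM.
    exact: measurable_funM (measurable_funM mw mq).
  - by apply/measurable_EFinP/measurable_funD => //; exact: measurable_funM.
  move=> x _; rewrite lee_fin.
  have := exprS_ge_tangent n p0 (q0 x); have := w0 x; rewrite exprS.
  move: (p ^+ n)%R (q x ^+ n.+1)%R (w x) (q x) => pn qn wx qx wx0 ineq; nra.
rewrite !integral_EFinD ?integral_EFinZl ?mulr_ge0 ?exprn_ge0 //= in tangent; try by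
  [move=> x; rewrite ?mulr_ge0 ?exprn_ge0 | exact: measurable_funM |
   exact: measurable_funM (measurable_funM mw mq)].
move: tangent; rewrite w1 wq_p !mule1 -EFinM exprS -mulrA (mulrC p).
by rewrite leeD2rE.
Qed.

End jensen.

Section measurable_finite_ops.
Context d (T : measurableType d) (R : realType).
Local Open Scope ereal_scope.

Lemma measurable_forall (I : finType) (G : I -> set T) :
  (forall i, measurable (G i)) -> measurable [set w | forall i, G i w].
Proof.
move=> mG; rewrite (_ : [set w | _] = \bigcap_(i in [set: I]) G i).
  by apply: fin_bigcap_measurable => //; exact: finite_finset.
by apply/seteqP; split => w /= Gw i //; exact: Gw.
Qed.

Lemma emeasurable_fun_prod (I : Type) (s : seq I) (Q : pred I) (F : I -> T -> \bar R) :
  (forall i, measurable_fun setT (F i)) ->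
  measurable_fun setT (fun x => \prod_(i <- s | Q i) F i x).
Proof.
move=> mF; elim: s => [|i s IHs].
  by under eq_fun do rewrite big_nil; exact: measurable_cst.
under eq_fun do rewrite big_cons.
by case: (Q i) => //; exact: emeasurable_funM.
Qed.

Lemma emeasurable_fun_bigmin k (F : nat -> T -> \bar R) :
  (forall i, measurable_fun setT (F i)) ->
  measurable_fun setT (fun x => \big[Order.min/+oo]_(i < k) F i x).
Proof.
move=> mF; elim: k => [|k IHk].
  by under eq_fun do rewrite big_ord0; exact: measurable_cst.
by under eq_fun do rewrite big_ord_recr /=; exact: measurable_mine.
Qed.

End measurable_finite_ops.

Lemma measurable_sqdist (R : realType) n d (T : measurableType d) (f g : T -> n.-tuple R) :
  measurable_fun setT f -> measurable_fun setT g ->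
  measurable_fun setT (fun w => sqdist (f w) (g w)).
Proof.
move=> mf mg; apply: measurable_sum => j; apply: measurable_funX.
by apply: measurable_funB; exact: measurableT_comp (measurable_tnth j) _.
Qed.

Lemma fine_probability_gt_ge d (T : measurableType d) (R : realType)
    (P : probability T R) (f : T -> R) (a c : R) :
  measurable_fun setT f -> (P [set w | (f w <= a)%R] <= c%:E)%E ->
  1 - c <= fine (P [set w | a < f w]).
Proof.
move=> mf Ple; have mle : measurable [set w | f w <= a].
  rewrite (_ : [set w | _] = f @^-1` `]-oo, a]); last first.
    by apply/seteqP; split => w; rewrite /= in_itv.
  by rewrite -[X in measurable X]setTI; exact: mf.
have Pfin : P [set w | f w <= a] \is a fin_num.
  by rewrite ge0_fin_numE // (le_lt_trans (probability_le1 P mle)) ?ltry.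
rewrite (_ : [set w | _] = ~` [set w | f w <= a]); last first.
  by apply/seteqP; split => w; rewrite /= ltNge => /negP.
by rewrite probability_setC // fineB // lerD2l lerN2 -lee_fin fineK.
Qed.

Section kernel_density.
Context d1 d2 (T1 : measurableType d1) (T2 : measurableType d2) (R : realType).
Local Open Scope ereal_scope.
Variables (lX : {sigma_finite_measure set T1 -> \bar R})
  (lY : {sigma_finite_measure set T2 -> \bar R}).
Variable fY : T2 -> T1 -> R.
Hypothesis mfY : measurable_fun [set: T2 * T1] (fun p => fY p.1 p.2).
Hypothesis fY_ge0 : forall y x, (0 <= fY y x)%R.
Hypothesis fY_int1 : forall x, \int[lY]_y (fY y x)%:E = 1.

Let kernel (z : T1 * T2) : \bar R := (fY z.2 z.1)%:E.

Let measurable_kernel : measurable_fun setT kernel.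
Proof.
apply/measurable_EFinP.
rewrite (_ : (fun z => _) = (fun p => fY p.1 p.2) \o (fun z => (z.2, z.1))) //.
by apply: measurableT_comp => //; exact: measurable_fun_pair.
Qed.

Let measurable_kernel_restrict S : measurable S -> measurable_fun setT (kernel \_ S).
Proof.
move=> mS; apply/(measurable_restrictT _ _).1 => //.
exact: measurable_funS measurable_kernel.
Qed.

Let kernel_restrict_ge0 S z : 0 <= (kernel \_ S) z.
Proof. by rewrite patchE; case: ifP; rewrite // lee_fin. Qed.

Let measurable_weighted_kernel (h : T1 -> \bar R) : measurable_fun setT h ->
  measurable_fun setT (fun z => h z.1 * kernel z).
Proof. by move=> mh; apply: emeasurable_funM => //; exact: measurableT_comp. Qed.

(* [cond_prob S x] is P((x, Y) \in S | X = x) when Y has conditional density fY *)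
Definition cond_prob (S : set (T1 * T2)) (x : T1) : \bar R :=
  \int[lY]_(y in xsection S x) (fY y x)%:E.

Let cond_probE S x : cond_prob S x = \int[lY]_y (kernel \_ S) (x, y).
Proof.
rewrite /cond_prob integral_mkcond; apply: eq_integral => y _.
by rewrite !patchE mem_xsection.
Qed.

Lemma cond_prob_ge0 S x : 0 <= cond_prob S x.
Proof. by apply: integral_ge0 => y _; rewrite lee_fin. Qed.

Lemma cond_prob_le1 S x : measurable S -> cond_prob S x <= 1.
Proof.
move=> mS; rewrite -(fY_int1 x); apply: ge0_subset_integral => //.
- exact: measurable_xsection.
- by apply/measurable_EFinP; exact: (measurable_fun_pair1 (f := fun p => fY p.1 p.2) x mfY).
- by move=> y _; rewrite lee_fin.
Qed.

Lemma measurable_cond_prob S : measurable S -> measurable_fun setT (cond_prob S).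
Proof.
move=> mS; rewrite (_ : cond_prob S = fubini_F lY (kernel \_ S)).
  apply: measurable_fun_fubini_tonelli_F; first exact: measurable_kernel_restrict.
  exact: kernel_restrict_ge0.
by apply/funext => x; rewrite cond_probE.
Qed.

Lemma cond_prob_setX A B x :
  cond_prob (A `*` B) x = (\1_A x)%:E * \int[lY]_(y in B) (fY y x)%:E.
Proof.
rewrite /cond_prob indicE; have [xA|xA] := boolP (x \in A).
  by rewrite in_xsectionX // mul1e.
by rewrite notin_xsectionX // integral_set0 mul0e.
Qed.

Let integral_cond_prob (h : T1 -> \bar R) S :
  measurable_fun setT h -> (forall x, 0 <= h x) -> measurable S ->
  \int[lX]_x (h x * cond_prob S x) = \int[lX \x lY]_(z in S) (h z.1 * kernel z).
Proof.
move=> mh h0 mS; rewrite [RHS]integral_mkcond fubini_tonelli1 /fubini_F.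
- apply: eq_integral => x _; rewrite cond_probE -ge0_integralZl //.
  + by apply: eq_integral => y _; rewrite !patchE; case: ifP; rewrite ?mule0.
  + exact: measurable_fun_pair2 (measurable_kernel_restrict mS).
- apply/(measurable_restrictT _ _).1 => //.
  exact: measurable_funTS (measurable_weighted_kernel mh).
- by move=> z; rewrite patchE; case: ifP => // _; rewrite mule_ge0 // lee_fin.
Qed.

Lemma law_of_joint_density d (Omega : measurableType d)
    (Q : {measure set Omega -> \bar R}) (Z : Omega -> T1 * T2) (h : T1 -> \bar R) :
  measurable_fun setT Z -> measurable_fun setT h -> (forall x, 0 <= h x) ->
  Q setT < +oo ->
  (forall A B, measurable A -> measurable B ->
     Q (Z @^-1` (A `*` B)) = \int[lX]_(x in A) (h x * \int[lY]_(y in B) (fY y x)%:E)) ->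
  forall S, measurable S -> Q (Z @^-1` S) = \int[lX]_x (h x * cond_prob S x).
Proof.
move=> mZ mh h0 Q_fin Q_rect S mS.
(* the image of Q by Z and the measure with density h(x) fY(y | x) with respect
   to lX \x lY are finite and agree on rectangles *)
have hk_ge0 z : 0 <= h z.1 * kernel z by rewrite mule_ge0 // lee_fin.
pose nu_fun S := \int[lX \x lY]_(z in S) (h z.1 * kernel z).
pose nu := HB.pack_for (measure _ R) nu_fun (isMeasure.Build _ _ _ nu_fun
  (integral_set0 _ _) (fun S => integral_ge0 _ (fun z _ => hk_ge0 z))
  (semi_sigma_additive_nng_induced (measurable_weighted_kernel mh) hk_ge0)).
rewrite (integral_cond_prob mh h0 mS) -/(pushforward Q Z S).
apply: (@measure_unique_setX _ _ _ _ _ (pushforward Q Z) nu) => // A B mA mB.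
rewrite /= /pushforward Q_rect // /nu_fun -integral_cond_prob //; last exact: measurableX.
rewrite integral_mkcond; apply: eq_integral => x _.
rewrite cond_prob_setX patchE indicE.
by case: (x \in A); rewrite ?mul1e ?mul0e ?mule0 // muleCA mul1e.
Qed.

End kernel_density.

Section conditionally_iid_agents.
Context (R : realType) (d m : nat) (dO : measure_display) (Omega : measurableType dO)
  (P : probability Omega R).
Local Open Scope ereal_scope.
Local Notation D := (d.-tuple R).
Local Notation M := (m.-tuple R).
Variables (lX : {measure set D -> \bar R}) (lY : {measure set M -> \bar R}).
Hypothesis lX_sigma_finite : sigma_finite setT lX.
Hypothesis lY_sigma_finite : sigma_finite setT lY.

(* copies of lX and lY equipped with their sigma-finite structure, for Fubini *)
Local Definition lXs : set D -> \bar R := lX.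
HB.instance Definition _ := Measure.on lXs.
HB.instance Definition _ := Measure_isSigmaFinite.Build _ _ _ lXs lX_sigma_finite.
Local Definition lYs : set M -> \bar R := lY.
HB.instance Definition _ := Measure.on lYs.
HB.instance Definition _ := Measure_isSigmaFinite.Build _ _ _ lYs lY_sigma_finite.
Variables (X : Omega -> D) (Y : nat -> Omega -> M) (fX : D -> R) (fY : M -> D -> R).
Hypothesis mX : measurable_fun setT X.
Hypothesis mY : forall i, measurable_fun setT (Y i).
Hypothesis mfX : measurable_fun setT fX.
Hypothesis fX_ge0 : forall x, (0 <= fX x)%R.
Hypothesis mfY : measurable_fun [set: M * D] (fun p => fY p.1 p.2).
Hypothesis fY_ge0 : forall y x, (0 <= fY y x)%R.
Hypothesis fY_int1 : forall x, \int[lY]_y (fY y x)%:E = 1.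
Hypothesis XY_density : cond_iid_density P X Y lX lY fX fY.

Local Notation cond_prob := (cond_prob lYs fY).

Definition agents_event (A : set D) k (S : 'I_k -> set (D * M)) : set Omega :=
  [set w | A (X w) /\ forall i : 'I_k, S i (X w, Y i w)].

Lemma measurable_agent_pair i (S : set (D * M)) :
  measurable S -> measurable ((fun w => (X w, Y i w)) @^-1` S).
Proof. by move=> mS; rewrite -[X in measurable X]setTI; exact: measurable_fun_pair. Qed.

Lemma measurable_agents_event A k (S : 'I_k -> set (D * M)) :
  measurable A -> (forall i, measurable (S i)) -> measurable (agents_event A S).
Proof.
move=> mA mS; apply: measurableI; first by rewrite -[X in measurable X]setTI; exact: mX.
by apply: measurable_forall => i; exact: measurable_agent_pair.
Qed.

Lemma fX_int1 : \int[lX]_x (fX x)%:E = 1.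
Proof.
have := @XY_density 0%N setT (fun=> setT) measurableT (fun=> measurableT).
rewrite (_ : [set w | _] = setT) ?probability_setT => [->|]; last first.
  by apply/seteqP; split => // w _; split => // -[].
by apply: eq_integral => x _; rewrite big_ord0 mule1.
Qed.

Let agents_event_with A k (S : 'I_k -> set (D * M)) i0 U :
  agents_event A [eta S with i0 |-> U] =
  [set w | A (X w) /\ forall i, i != i0 -> S i (X w, Y i w)] `&`
  ((fun w => (X w, Y i0 w)) @^-1` U).
Proof.
apply/seteqP; split => w /=.
  move=> [Aw Sw]; split; first by split => // i; have := Sw i => /=; case: eqP.
  by have := Sw i0; rewrite /= eqxx.
by move=> [[Aw Sw] Uw]; split => // i /=; case: eqP => [->|/eqP]; last exact: Sw.
Qed.

Let prod_cond_prob_with k (S : 'I_k -> set (D * M)) i0 U x :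
  \prod_(i < k) cond_prob ([eta S with i0 |-> U] i) x =
  cond_prob U x * \prod_(i < k | i != i0) cond_prob (S i) x.
Proof.
rewrite (bigD1 i0) //= eqxx; congr (_ * _).
by apply: eq_bigr => i /negbTE /= ->.
Qed.

Let prob_agents_event_rect A k (B : 'I_k -> set M) :
  measurable A -> (forall i, measurable (B i)) ->
  P (agents_event A (fun i => setT `*` B i)) =
  \int[lX]_(x in A) ((fX x)%:E * \prod_(i < k) cond_prob (setT `*` B i) x).
Proof.
move=> mA mB; rewrite (_ : agents_event _ _ = [set w | A (X w) /\ forall i, B i (Y i w)]).
  rewrite XY_density //; apply: eq_integral => x _; congr (_ * _).
  by apply: eq_bigr => i _; rewrite cond_prob_setX indicE in_setT mul1e.
by apply/seteqP; split => w [Aw Bw]; split => // i; have [] := Bw i.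
Qed.

Let agents_event_split A k (S : 'I_k -> set (D * M)) i0 U :
  agents_event A [eta S with i0 |-> U] =
  agents_event A [eta S with i0 |-> setT] `&` ((fun w => (X w, Y i0 w)) @^-1` U).
Proof. by rewrite !agents_event_with preimage_setT setIT. Qed.

Let weight A k (S : 'I_k -> set (D * M)) i0 x :=
  (\1_A x)%:E * ((fX x)%:E * \prod_(i < k | i != i0) cond_prob (S i) x).

Let measurable_weight A k (S : 'I_k -> set (D * M)) i0 :
  measurable A -> (forall i, measurable (S i)) -> measurable_fun setT (weight A S i0).
Proof.
move=> mA mS; apply: emeasurable_funM; first exact/measurable_EFinP/measurable_indic.
apply: emeasurable_funM; first exact/measurable_EFinP.
by apply: emeasurable_fun_prod => i; exact: measurable_cond_prob.
Qed.

Let weight_ge0 A k (S : 'I_k -> set (D * M)) i0 x : 0 <= weight A S i0 x.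
Proof. by rewrite !mule_ge0 ?lee_fin // prode_ge0 // => i _; exact: cond_prob_ge0. Qed.

Let integral_weight A A' k (S : 'I_k -> set (D * M)) i0 U :
  \int[lX]_(x in A') (weight A S i0 x * cond_prob U x) =
  \int[lX]_(x in A `&` A')
    ((fX x)%:E * \prod_(i < k) cond_prob ([eta S with i0 |-> U] i) x).
Proof.
rewrite integral_mkcond [RHS]integral_mkcond; apply: eq_integral => x _.
rewrite !patchE /weight indicE in_setI prod_cond_prob_with.
by case: (x \in A); case: (x \in A') => /=; rewrite ?mul1e ?mul0e // muleCA muleC.
Qed.

(* Conditioning on all agents but i0 leaves a finite measure on D * M whose
   values on rectangles are given; uniqueness extends them to every set. *)
Let prob_agents_event_with A k (S : 'I_k -> set (D * M)) i0 :
  measurable A -> (forall i, measurable (S i)) ->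
  (forall A' B', measurable A' -> measurable B' ->
     P (agents_event A' [eta S with i0 |-> setT `*` B']) =
     \int[lX]_(x in A') ((fX x)%:E *
        \prod_(i < k) cond_prob ([eta S with i0 |-> setT `*` B'] i) x)) ->
  P (agents_event A S) = \int[lX]_(x in A) ((fX x)%:E * \prod_(i < k) cond_prob (S i) x).
Proof.
move=> mA mS S_rect.
have mE : measurable (agents_event A [eta S with i0 |-> setT]).
  by apply: measurable_agents_event => // i /=; case: eqP.
have -> : S = [eta S with i0 |-> S i0] by apply/funext => i /=; case: eqP => // ->.
rewrite -[A in RHS]setIT -integral_weight agents_event_split setIC.
transitivity (mrestr P mE ((fun w => (X w, Y i0 w)) @^-1` S i0)); first by [].
apply: (law_of_joint_density (lX := lXs) (lY := lYs) mfY fY_ge0 (Q := mrestr P mE)) => //.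
- exact: measurable_fun_pair.
- exact: measurable_weight.
- exact: le_lt_trans (probability_le1 P (measurableI _ _ measurableT mE)) (ltry _).
move=> A' B' mA' mB'.
have rectE x : \int[lY]_(y in B') (fY y x)%:E = cond_prob (setT `*` B') x.
  by rewrite cond_prob_setX indicE in_setT mul1e.
under eq_integral => x _ do rewrite rectE.
rewrite integral_weight -S_rect //; last exact: measurableI.
rewrite [in RHS]agents_event_split; congr (P _); apply/seteqP; split => w /=.
- by move=> [[A'w B'w] [Aw Sw]]; do !split.
- by move=> [[[Aw A'w] Sw] [_ B'w]].
Qed.

Let prob_agents_event_rect_from k j : (j <= k)%N ->
  forall A (S : 'I_k -> set (D * M)), measurable A -> (forall i, measurable (S i)) ->
  (forall i : 'I_k, (j <= i)%N -> exists2 B, measurable B & S i = setT `*` B) ->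
  P (agents_event A S) = \int[lX]_(x in A) ((fX x)%:E * \prod_(i < k) cond_prob (S i) x).
Proof.
elim: j => [|j IHj] jk A S mA mS S_rect.
  have /choice[B SB] : forall i, exists B, measurable B /\ S i = setT `*` B.
    by move=> i; have [B mB ->] := S_rect i (leq0n i); exists B.
  rewrite (_ : S = fun i => setT `*` B i); last by apply/funext => i; case: (SB i).
  by apply: prob_agents_event_rect => // i; case: (SB i).
apply: (prob_agents_event_with (i0 := Ordinal jk)) => // A' B' mA' mB'.
apply: IHj; rewrite ?(ltnW jk) //.
- by move=> i /=; case: eqP => // _; exact: measurableX.
move=> i /= ji; case: eqP => [_|/eqP ii0]; first by exists B'.
apply: S_rect; rewrite ltn_neqAle ji andbT eq_sym.
by apply: contra ii0 => /eqP ji'; apply/eqP/val_inj.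
Qed.

Lemma prob_agents_event A k (S : 'I_k -> set (D * M)) :
  measurable A -> (forall i, measurable (S i)) ->
  P (agents_event A S) = \int[lX]_(x in A) ((fX x)%:E * \prod_(i < k) cond_prob (S i) x).
Proof.
move=> mA mS; apply: (prob_agents_event_rect_from (leqnn k)) => // i.
by rewrite leqNgt ltn_ord.
Qed.

Variables (g : M -> D) (Yg : Omega -> M).
Hypothesis mg : measurable_fun setT g.
Hypothesis mYg : measurable_fun setT Yg.
Hypothesis XYg_density : pair_density P X Yg lX lY fX fY.

Let error_gt a : set (D * M) := [set z | (a < sqdist z.1 (g z.2))%R].

Let measurable_error_gt a : measurable (error_gt a).
Proof.
rewrite (_ : error_gt a = (fun z => sqdist z.1 (g z.2)) @^-1` `]a, +oo[); last first.
  by apply/seteqP; split => z; rewrite /= in_itv /= andbT.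
have := measurable_sqdist measurable_fst (measurableT_comp mg measurable_snd).
by rewrite -[X in measurable X]setTI; apply.
Qed.

Let cond_tail a x : R := fine (cond_prob (error_gt a) x).

Let cond_tailE a x : cond_prob (error_gt a) x = (cond_tail a x)%:E.
Proof.
have := cond_prob_le1 (lY := lYs) mfY fY_ge0 fY_int1 x (measurable_error_gt a).
by move=> /le_lt_trans/(_ (ltry _)) lt1; rewrite fineK // ge0_fin_numE ?cond_prob_ge0.
Qed.

Let cond_tail_ge0 a x : (0 <= cond_tail a x)%R.
Proof. by rewrite -lee_fin -cond_tailE cond_prob_ge0. Qed.

Let measurable_cond_tail a : measurable_fun setT (cond_tail a).
Proof.
have := measurable_cond_prob lYs mfY fY_ge0 (measurable_error_gt a).
exact: measurableT_comp (fine_measurable measurableT).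
Qed.

Let prob_tail a :
  P [set w | a < sqdist (X w) (g (Yg w))]%R = \int[lX]_x (fX x * cond_tail a x)%:E.
Proof.
transitivity (P ((fun w => (X w, Yg w)) @^-1` error_gt a)); first by [].
rewrite (law_of_joint_density (lX := lXs) (lY := lYs) mfY fY_ge0
  (h := fun x => (fX x)%:E)) //.
- by apply: eq_integral => x _; rewrite cond_tailE.
- exact: measurable_fun_pair.
- exact/measurable_EFinP.
- exact: le_lt_trans (probability_le1 P measurableT) (ltry _).
Qed.

Let prob_all_agents_tail a k :
  P (agents_event setT (fun _ : 'I_k => error_gt a)) =
  \int[lX]_x (fX x * cond_tail a x ^+ k)%:E.
Proof.
rewrite prob_agents_event //; apply: eq_integral => x _.
by rewrite cond_tailE prodEFin prodr_const card_ord -EFinM.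
Qed.

Let D2_ge_prob_all_agents a k : (0 <= a)%R ->
  a%:E * P (agents_event setT (fun _ : 'I_k => error_gt a)) <= D2 P X Y g k.
Proof.
move=> a0.
have mall := measurable_agents_event measurableT (fun _ : 'I_k => measurable_error_gt a).
rewrite -[_ * _](integral_cst _ mall) integral_mkcond /D2.
apply: ge0_le_integral => //.
- by move=> w _; rewrite patchE; case: ifP; rewrite // lee_fin.
- by apply/(measurable_restrictT _ _).1 => //; exact: measurable_cst.
- apply: (@emeasurable_fun_bigmin _ _ _ k (fun i w => (sqdist (X w) (g (Y i w)))%:E)) => i.
  exact/measurable_EFinP/(measurable_sqdist mX (measurableT_comp mg (mY i))).
move=> w _; rewrite patchE; case: ifPn => [/set_mem [_ Sw]|_].
  by apply: le_bigmin => [|i _]; rewrite ?leey // lee_fin ltW // Sw.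
by apply: le_bigmin => [|i _]; rewrite ?leey // lee_fin sumr_ge0 // => j _; exact: sqr_ge0.
Qed.

Lemma D2_ge_tail_prob (a : R) k : (0 <= a)%R ->
  ((a * fine (P [set w | a < sqdist (X w) (g (Yg w))]) ^+ k)%:E <= D2 P X Y g k).
Proof.
move=> a0; apply: le_trans (D2_ge_prob_all_agents k a0).
rewrite EFinM lee_wpmul2l ?lee_fin // prob_all_agents_tail.
apply: jensen_exprn => //; first exact: fX_int1.
have mtail : measurable ((fun w => (X w, Yg w)) @^-1` error_gt a).
  by rewrite -[X in measurable X]setTI; exact: measurable_fun_pair.
rewrite -prob_tail fineK // ge0_fin_numE //.
exact: le_lt_trans (probability_le1 P mtail) (ltry _).
Qed.

End conditionally_iid_agents.

Section threshold.
Context (R : realType).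
Implicit Types (C alpha : R) (k : nat).

Definition threshold C alpha k : R := (C * (1 + alpha * k%:R))^-1 `^ alpha^-1.

Let one_add_mul_gt0 alpha k : 0 < alpha -> 0 < 1 + alpha * k%:R.
Proof. by move=> al0; rewrite ltr_wpDr // mulr_ge0 // ltW. Qed.

Lemma threshold_ge0 C alpha k : 0 <= threshold C alpha k.
Proof. exact: powR_ge0. Qed.

Lemma one_sub_mul_threshold C alpha k : 0 < C -> 0 < alpha ->
  1 - C * threshold C alpha k `^ alpha = alpha * k%:R / (1 + alpha * k%:R).
Proof.
move=> C0 al0; have k1 := one_add_mul_gt0 k al0.
rewrite /threshold -powRrM mulVf ?gt_eqF // powRr1; last first.
  by rewrite invr_ge0 mulr_ge0 // ltW.
by field; rewrite !gt_eqF.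
Qed.

Lemma threshold_le C alpha a0 k : 0 < C -> 0 < alpha -> 0 < a0 ->
  (alpha * C * a0 `^ alpha)^-1 <= k%:R -> threshold C alpha k <= a0.
Proof.
move=> C0 al0 a00 hk; set s := a0 `^ alpha; have s0 : 0 < s by rewrite powR_gt0.
have -> : a0 = s `^ alpha^-1 by rewrite -powRrM mulfV ?gt_eqF // powRr1 // ltW.
have k1 := one_add_mul_gt0 k al0.
apply: ge0_ler_powR; first by rewrite invr_ge0 ltW.
- by rewrite nnegrE invr_ge0 mulr_ge0 // ltW.
- by rewrite nnegrE ltW.
rewrite -(invrK s) lef_pV2 ?posrE ?invr_gt0 ?mulr_gt0 //.
move: hk; rewrite invfM ler_pdivrMl ?mulr_gt0 //.
move: (k%:R : R) (s^-1) => kk t; nra.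
Qed.

Lemma threshold_ge C alpha k : 0 < C -> 0 < alpha -> (0 < k)%N ->
  (C * (1 + alpha))^-1 `^ alpha^-1 * k%:R `^ (- alpha^-1) <= threshold C alpha k.
Proof.
move=> C0 al0 k0; have k1 := one_add_mul_gt0 k al0.
have kR0 : 0 < k%:R :> R by rewrite ltr0n.
have kR1 : 1 <= k%:R :> R by rewrite ler1n.
rewrite powRN ler_pdivrMr ?powR_gt0 // -powRM ?invr_ge0 ?mulr_ge0 ?ler0n //;
  try exact: ltW.
have Ck0 : 0 < C * (1 + alpha * k%:R) by rewrite mulr_gt0.
have Ca0 : 0 < C * (1 + alpha) by rewrite mulr_gt0 // addr_gt0.
apply: ge0_ler_powR; first by rewrite invr_ge0 ltW.
- by rewrite nnegrE invr_ge0 ltW.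
- by rewrite nnegrE mulr_ge0 ?ler0n // invr_ge0 ltW.
rewrite [leRHS]mulrC ler_pdivlMr // ler_pdivrMl //.
move: (k%:R : R) kR1 => kk kk1; nra.
Qed.

Lemma threshold_bound_Omega C alpha a0 (u : nat -> \bar R) :
  0 < C -> 0 < alpha -> 0 < a0 ->
  (forall k, threshold C alpha k <= a0 ->
     ((expR (- alpha^-1) * threshold C alpha k)%:E <= u k)%E) ->
  exists c, 0 < c /\ exists K : nat, forall k, (K <= k)%N ->
    ((c * k%:R `^ (- alpha^-1))%:E <= u k)%E.
Proof.
move=> C0 al0 a00 hu; exists (expR (- alpha^-1) * (C * (1 + alpha))^-1 `^ alpha^-1).
split; first by rewrite mulr_gt0 ?expR_gt0 // powR_gt0 // invr_gt0 mulr_gt0 // addr_gt0.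
exists (Num.truncn (alpha * C * a0 `^ alpha)^-1).+1 => k Kk.
have k0 : (0 < k)%N by apply: leq_trans Kk.
apply: le_trans (hu k _); first by rewrite lee_fin -mulrA ler_wpM2l ?expR_ge0 ?threshold_ge.
apply: threshold_le => //; apply/ltW/(lt_le_trans (truncnS_gt _)).
by rewrite ler_nat.
Qed.

End threshold.

Theorem theorem2 (R : realType) (dO : measure_display) (Omega : measurableType dO)
  (P : probability Omega R) (d m : nat)
  (X : Omega -> d.-tuple R) (Y : nat -> Omega -> m.-tuple R) (Yg : Omega -> m.-tuple R)
  (lX : {measure set (d.-tuple R) -> \bar R}) (lY : {measure set (m.-tuple R) -> \bar R})
  (fX : d.-tuple R -> R) (fY : m.-tuple R -> d.-tuple R -> R)
  (g : m.-tuple R -> d.-tuple R) (C alpha a0 : R) :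
  sigma_finite [set: d.-tuple R] lX ->
  sigma_finite [set: m.-tuple R] lY ->
  measurable_fun [set: Omega] X ->
  (forall i, measurable_fun [set: Omega] (Y i)) ->
  measurable_fun [set: Omega] Yg ->
  (forall j : 'I_d, P.-integrable [set: Omega] (fun w => (tnth (X w) j)%:E)) ->
  measurable_fun [set: d.-tuple R] fX ->
  (forall x, 0 <= fX x) ->
  measurable_fun [set: m.-tuple R * d.-tuple R] (fun p => fY p.1 p.2) ->
  (forall y x, 0 <= fY y x) ->
  (forall x, (\int[lY]_y (fY y x)%:E = 1)%E) ->
  cond_iid_density P X Y lX lY fX fY ->
  pair_density P X Yg lX lY fX fY ->
  is_cond_exp_fun P X Yg g ->
  0 < C -> 0 < alpha -> 0 < a0 ->
  (forall a : R, 0 <= a -> a <= a0 ->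
     (P [set w | (sqdist (X w) (g (Yg w)) <= a)%R] <= (C * a `^ alpha)%:E)%E) ->
  (forall k : nat,
     (C * (1 + alpha * k%:R))^-1 `^ alpha^-1 <= a0 ->
     ((expR (- alpha^-1) * (C * (1 + alpha * k%:R))^-1 `^ alpha^-1)%:E
        <= D2 P X Y g k)%E)
  /\
  (exists c : R, 0 < c /\ exists K : nat, forall k : nat, (K <= k)%N ->
     ((c * k%:R `^ (- alpha^-1))%:E <= D2 P X Y g k)%E).
Proof.
move=> sX sY mX mY mYg _ mfX fX_ge0 mfY fY_ge0 fY_int1 XY_density XYg_density [mg _].
move=> C0 al0 a00 small_ball.
have tail_bound := D2_ge_tail_prob sX sY mX mY mfX fX_ge0 mfY fY_ge0 fY_int1 XY_density
  mg mYg XYg_density.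
have bound k : threshold C alpha k <= a0 ->
    ((expR (- alpha^-1) * threshold C alpha k)%:E <= D2 P X Y g k)%E.
  move=> ka0; set a := threshold C alpha k.
  apply: le_trans (tail_bound a k (threshold_ge0 _ _ _)); rewrite lee_fin mulrC.
  apply: ler_wpM2l; first exact: threshold_ge0.
  apply: le_trans (expR_le_expr_ratio k al0) _.
  have ratio_ge0 : 0 <= alpha * k%:R / (1 + alpha * k%:R).
    by rewrite divr_ge0 ?addr_ge0 ?mulr_ge0 // ltW.
  apply: lerXn2r; rewrite ?nnegrE ?fine_ge0 // -(one_sub_mul_threshold k C0 al0).
  apply: fine_probability_gt_ge; last exact: small_ball (threshold_ge0 _ _ _) ka0.
  exact: measurable_sqdist mX (measurableT_comp mg mYg).
split; first exact: bound.
exact: threshold_bound_Omega C0 al0 a00 bound.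
Qed.
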